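(* Let $G$ be a CDF and define $r(v,b,\alpha)=(v-b)G(b)+\alpha\int_0^bG(y)\,dy$. Then $b^*(v,\alpha)=\arg\max_b r(v,b,\alpha)$, taking the largest maximizer in case of a tie, is a non-decreasing function of $v$ and a non-decreasing function of $\alpha$.
   Context: Here $G$ is the distribution of the highest competing bid in a repeated non-credible second-price auction, $v\in[0,1]$ is the bidder's value, $b\ge 0$ is a bid and $\alpha\in[0,1]$ is the seller's credibility parameter; $r(v,b,\alpha)$ is the bidder's expected reward when bidding $b$ with value $v$ and the winner pays $\alpha d+(1-\alpha)b$, $d\sim G$. *)

From Stdlib Require Import Reals.
From Coquelicot Require Import Coquelicot.
Open Scope R_scope.

Definition is_cdf (G : R -> R) : Prop :=
  (forall x y, x <= y -> G x <= G y) /\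
  (forall x, filterlim G (at_right x) (locally (G x))) /\
  filterlim G (Rbar_locally m_infty) (locally 0) /\
  filterlim G (Rbar_locally p_infty) (locally 1).

(* r(v,b,alpha) = (v - b) G(b) + alpha * int_0^b G(y) dy
   (G is monotone, hence Riemann integrable on [0,b], so RInt is the integral). *)
Definition reward (G : R -> R) (v b alpha : R) : R :=
  (v - b) * G b + alpha * RInt G 0 b.

Definition is_largest_argmax (f : R -> R) (b : R) : Prop :=
  0 <= b /\
  (forall b', 0 <= b' -> f b' <= f b) /\
  (forall b', 0 <= b' -> f b' = f b -> b' <= b).

(* Both monotonicity claims are instances of monotone comparative statics: if
   f2 - f1 is nondecreasing, the largest maximizer of f2 is at least any
   maximizer of f1.  Raising the value adds (v2 - v1) G(b), raising the
   credibility adds (alpha2 - alpha1) int_0^b G, and both are nondecreasing in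
   b since G is nondecreasing and nonnegative.  The only analytic input is that
   a monotone function is Riemann integrable, proved by uniform approximation
   with staircase functions. *)
From Stdlib Require Import Reals Lra.
From Coquelicot Require Import Coquelicot.
Open Scope R_scope.

Definition nondecreasing (f : R -> R) : Prop := forall x y, x <= y -> f x <= f y.

Lemma largest_argmax_mono (f1 f2 : R -> R) (b1 b2 : R) :
  is_largest_argmax f1 b1 -> is_largest_argmax f2 b2 ->
  (forall x y, 0 <= x -> x <= y -> f2 x - f1 x <= f2 y - f1 y) ->
  b1 <= b2.
Proof.
  intros [Hb1 [Hmax1 _]] [Hb2 [Hmax2 Hlargest2]] Hdiff.
  destruct (Rle_lt_dec b1 b2) as [Hle | Hlt]; [exact Hle |].
  assert (f1 b2 <= f1 b1) by (apply Hmax1; exact Hb2).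
  assert (f2 b2 - f1 b2 <= f2 b1 - f1 b1) by (apply Hdiff; lra).
  assert (f2 b1 <= f2 b2) by (apply Hmax2; lra).
  assert (b1 <= b2) by (apply Hlargest2; lra).
  lra.
Qed.

Lemma nondecreasing_lim_m_infty_le (f : R -> R) (l x : R) :
  nondecreasing f -> filterlim f (Rbar_locally m_infty) (locally l) -> l <= f x.
Proof.
  intros Hf Hlim.
  apply (is_lim_le_loc f (fun _ => f x) m_infty l (f x)).
  - exists x. intros y Hy. apply Hf. lra.
  - exact Hlim.
  - apply is_lim_const.
Qed.

Lemma cdf_ge0 (G : R -> R) (x : R) : is_cdf G -> 0 <= G x.
Proof.
  intros [Hmono [_ [Hlim _]]].
  exact (nondecreasing_lim_m_infty_le G 0 x Hmono Hlim).
Qed.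

Lemma ex_RInt_const_on (f : R -> R) (a b k : R) :
  (forall x, Rmin a b < x < Rmax a b -> f x = k) -> ex_RInt f a b.
Proof.
  intros Hk. apply (ex_RInt_ext (fun _ => k)).
  - intros x Hx. symmetry. exact (Hk x Hx).
  - apply ex_RInt_const.
Qed.

Lemma ex_RInt_threshold (g : R -> R) (c d a b : R) :
  a <= b -> nondecreasing g ->
  ex_RInt (fun x => if Rle_dec c (g x) then d else 0) a b.
Proof.
  intros Hab Hg.
  set (below := fun x => x <= b /\ (x <= a \/ g x < c)).
  destruct (completeness below) as [s [Hub Hlub]].
  { exists b. intros x [Hx _]. exact Hx. }
  { exists a. split; [exact Hab | left; lra]. }
  assert (Has : a <= s) by (apply Hub; split; [exact Hab | left; lra]).
  assert (Hsb : s <= b) by (apply Hlub; intros x [Hx _]; exact Hx).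
  apply ex_RInt_Chasles with s.
  - apply ex_RInt_const_on with 0.
    rewrite Rmin_left, Rmax_right by exact Has.
    intros x Hx.
    (* if c <= g x, then x would be an upper bound of [below] below its sup s *)
    destruct (Rle_dec c (g x)) as [Hcx | _]; [exfalso | reflexivity].
    assert (Hsx : s <= x); [| lra].
    apply Hlub. intros y [_ [Hya | Hyc]]; [lra |].
    destruct (Rle_lt_dec y x) as [Hyx | Hxy]; [exact Hyx |].
    assert (g x <= g y) by (apply Hg; lra). lra.
  - apply ex_RInt_const_on with d.
    rewrite Rmin_left, Rmax_right by exact Hsb.
    intros x Hx.
    destruct (Rle_dec c (g x)) as [_ | Hxc]; [reflexivity | exfalso].
    assert (x <= s) by (apply Hub; split; [lra | right; lra]).
    lra.
Qed.

Fixpoint staircase (g : R -> R) (m d : R) (N : nat) (x : R) : R :=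
  match N with
  | O => m
  | S n => staircase g m d n x + (if Rle_dec (m + INR (S n) * d) (g x) then d else 0)
  end.

Lemma ex_RInt_staircase (g : R -> R) (m d a b : R) (N : nat) :
  a <= b -> nondecreasing g -> ex_RInt (staircase g m d N) a b.
Proof.
  intros Hab Hg. induction N as [| n IH]; simpl.
  - apply ex_RInt_const.
  - apply (ex_RInt_plus (V := R_NormedModule)); [exact IH |].
    exact (ex_RInt_threshold g _ d a b Hab Hg).
Qed.

Lemma staircase_approx (g : R -> R) (m d : R) (N : nat) (x : R) :
  0 < d -> m <= g x <= m + INR N * d ->
  staircase g m d N x <= g x <= staircase g m d N x + d.
Proof.
  intros Hd [Hm HM].
  (* invariant: either all N steps are taken, or the staircase sits within d below g x *)
  enough (H : (m + INR N * d <= g x /\ staircase g m d N x = m + INR N * d) \/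
              (g x < m + INR N * d /\ staircase g m d N x <= g x < staircase g m d N x + d))
    by (destruct H as [[H1 H2] | [H1 H2]]; lra).
  clear HM. induction N as [| n IH]; cbn [staircase].
  - left. simpl. lra.
  - rewrite S_INR in *.
    destruct (Rle_dec (m + (INR n + 1) * d) (g x)) as [Hstep | Hstep].
    + left. destruct IH as [[_ ->] | [H1 _]]; split; lra.
    + apply Rnot_le_lt in Hstep.
      right. destruct IH as [[H1 ->] | [H1 H2]]; split; lra.
Qed.

Lemma ex_RInt_uniform_limit (f : nat -> R -> R) (g : R -> R) (e : nat -> R) (a b : R) :
  is_lim_seq e 0 -> (forall n, ex_RInt (f n) a b) ->
  (forall n x, Rabs (f n x - g x) <= e n) -> ex_RInt g a b.
Proof.
  intros He Hf Hfg.
  assert (Hunif : filterlim f eventually (locally g)).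
  { apply filterlim_locally. intros eps.
    apply is_lim_seq_spec in He. destruct (He eps) as [N HN].
    exists N. intros n Hn t. specialize (HN n Hn). specialize (Hfg n t).
    change (Rabs (f n t - g t) < eps).
    rewrite Rminus_0_r in HN. pose proof (Rle_abs (e n)). lra. }
  destruct (filterlim_RInt (V := R_CompleteNormedModule) f a b eventually
              eventually_filter g (fun n => RInt (f n) a b)) as [I [_ HI]].
  - intros n. exact (RInt_correct (V := R_CompleteNormedModule) _ _ _ (Hf n)).
  - exact Hunif.
  - exists I. exact HI.
Qed.

Lemma is_lim_seq_div_INR_S (c : R) : is_lim_seq (fun n => c / INR (S n)) 0.
Proof.
  replace (Finite 0) with (Rbar_mult c (Rbar_inv p_infty)) by (simpl; f_equal; ring).
  apply is_lim_seq_scal_l, is_lim_seq_inv; [| discriminate].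
  apply (is_lim_seq_incr_1 INR). exact is_lim_seq_INR.
Qed.

Lemma ex_RInt_nondecreasing_bounded (g : R -> R) (m M a b : R) :
  a <= b -> nondecreasing g -> (forall x, m <= g x <= M) -> ex_RInt g a b.
Proof.
  intros Hab Hg Hbound.
  (* n + 1 steps of height d n climb M - m + 1 > 0, so they cover the range even if m = M *)
  set (d := fun n => (M - m + 1) / INR (S n)).
  assert (Hd : forall n, 0 < d n).
  { intros n. assert (m <= M) by (destruct (Hbound 0); lra).
    apply Rdiv_lt_0_compat; [lra | apply lt_0_INR, Nat.lt_0_succ]. }
  apply (ex_RInt_uniform_limit (fun n => staircase g m (d n) (S n)) g d).
  - apply is_lim_seq_div_INR_S.
  - intros n. exact (ex_RInt_staircase g m (d n) a b (S n) Hab Hg).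
  - intros n x.
    assert (Htop : INR (S n) * d n = M - m + 1)
      by (unfold d; field; apply not_0_INR; discriminate).
    destruct (staircase_approx g m (d n) (S n) x (Hd n)) as [H1 H2].
    { specialize (Hbound x). lra. }
    rewrite Rabs_left1; lra.
Qed.

Lemma ex_RInt_nondecreasing (g : R -> R) (a b : R) :
  a <= b -> nondecreasing g -> ex_RInt g a b.
Proof.
  intros Hab Hg.
  (* clamping g to [g a, g b] changes nothing on [a, b] and makes it bounded *)
  set (clamp := fun x => Rmin (Rmax (g x) (g a)) (g b)).
  assert (Hgab : g a <= g b) by (apply Hg; exact Hab).
  apply (ex_RInt_ext clamp).
  - rewrite Rmin_left, Rmax_right by exact Hab.
    intros x Hx. unfold clamp.
    rewrite Rmax_left, Rmin_left by (apply Hg; lra). reflexivity.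
  - apply (ex_RInt_nondecreasing_bounded clamp (g a) (g b)); [exact Hab | |].
    + intros x y Hxy. unfold clamp.
      apply Rle_min_compat_r, Rle_max_compat_r, Hg, Hxy.
    + intros x. unfold clamp. split.
      * apply Rmin_glb; [apply Rmax_r | exact Hgab].
      * apply Rmin_r.
Qed.

Lemma RInt_nondecreasing_nonneg_le (g : R -> R) (a x y : R) :
  nondecreasing g -> (forall t, 0 <= g t) -> a <= x -> x <= y ->
  RInt g a x <= RInt g a y.
Proof.
  intros Hg Hpos Hax Hxy.
  assert (Iax : ex_RInt g a x) by (apply ex_RInt_nondecreasing; assumption).
  assert (Ixy : ex_RInt g x y) by (apply ex_RInt_nondecreasing; assumption).
  rewrite <- (RInt_Chasles g a x y Iax Ixy).
  assert (0 <= RInt g x y) by (apply RInt_ge_0; auto).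
  change (plus (RInt g a x) (RInt g x y)) with (RInt g a x + RInt g x y).
  lra.
Qed.

Theorem lemma3 (G : R -> R) (HG : is_cdf G) :
  (forall (alpha v1 v2 b1 b2 : R),
      0 <= alpha <= 1 -> 0 <= v1 -> v1 <= v2 -> v2 <= 1 ->
      is_largest_argmax (fun b => reward G v1 b alpha) b1 ->
      is_largest_argmax (fun b => reward G v2 b alpha) b2 ->
      b1 <= b2) /\
  (forall (v alpha1 alpha2 b1 b2 : R),
      0 <= v <= 1 -> 0 <= alpha1 -> alpha1 <= alpha2 -> alpha2 <= 1 ->
      is_largest_argmax (fun b => reward G v b alpha1) b1 ->
      is_largest_argmax (fun b => reward G v b alpha2) b2 ->
      b1 <= b2).
Proof.
  pose proof (proj1 HG : nondecreasing G) as Hmono.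
  split.
  - intros alpha v1 v2 b1 b2 _ _ Hv _ H1 H2.
    apply (largest_argmax_mono _ _ _ _ H1 H2). intros x y _ Hxy. unfold reward.
    assert (G x <= G y) by (apply Hmono; exact Hxy).
    nra.
  - intros v alpha1 alpha2 b1 b2 _ _ Halpha _ H1 H2.
    apply (largest_argmax_mono _ _ _ _ H1 H2). intros x y Hx Hxy. unfold reward.
    assert (RInt G 0 x <= RInt G 0 y)
      by (apply RInt_nondecreasing_nonneg_le; try assumption; intros t; exact (cdf_ge0 G t HG)).
    nra.
Qed.
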